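(* Let $G$ be a non-amenable group and let $H$ be a subgroup of finite index in $G$. Then $$\mathcal{T}(H)-2\leq [G:H]\,(\mathcal{T}(G)-2).$$
   Context: A group $G$ admits a paradoxical decomposition if there exist positive integers $m,n$, pairwise disjoint subsets $P_1,\ldots,P_m,Q_1,\ldots,Q_n$ of $G$ and elements $g_1,\ldots,g_m,h_1,\ldots,h_n\in G$ such that $G=\bigcup_{i=1}^m P_ig_i=\bigcup_{j=1}^n Q_jh_j$. A group admits a paradoxical decomposition if and only if it is non-amenable. For a non-amenable group $G$, the Tarski number $\mathcal{T}(G)$ is the minimal possible value of $m+n$ over all paradoxical decompositions of $G$ (a finite index subgroup of a non-amenable group is non-amenable). *)

From Stdlib Require Import Arith ZArith Lia.

Record Grp := {
  gcar :> Type;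
  gmul : gcar -> gcar -> gcar;
  gone : gcar;
  ginv : gcar -> gcar;
  gmulA : forall x y z, gmul x (gmul y z) = gmul (gmul x y) z;
  gmul1l : forall x, gmul gone x = x;
  gmulVl : forall x, gmul (ginv x) x = gone
}.

Definition is_subgroup (G : Grp) (H : G -> Prop) : Prop :=
  H (gone G) /\
  (forall x y, H x -> H y -> H (gmul G x y)) /\
  (forall x, H x -> H (ginv G x)).

Definition full (G : Grp) : G -> Prop := fun _ => True.

(* [G:H] = d : there are d right cosets H r_0, ..., H r_(d-1) and every
   element of G lies in exactly one of them. *)
Definition has_index (G : Grp) (H : G -> Prop) (d : nat) : Prop :=
  exists r : nat -> G,
    forall x : G, exists j, j < d /\ H (gmul G x (ginv G (r j))) /\
      forall j', j' < d -> H (gmul G x (ginv G (r j'))) -> j' = j.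

(* A paradoxical decomposition of the group S (a subgroup of G, viewed as a
   group in its own right) with m pieces P_i and n pieces Q_j:
   pairwise disjoint subsets of S, elements g_i, h_j of S, and
   S = U_i P_i g_i = U_j Q_j h_j. *)
Definition paradoxical (G : Grp) (S : G -> Prop) (m n : nat) : Prop :=
  0 < m /\ 0 < n /\
  exists (P Q : nat -> G -> Prop) (g h : nat -> G),
    (forall i x, i < m -> P i x -> S x) /\
    (forall j x, j < n -> Q j x -> S x) /\
    (forall i, i < m -> S (g i)) /\
    (forall j, j < n -> S (h j)) /\
    (forall i i' x, i < m -> i' < m -> i <> i' -> P i x -> P i' x -> False) /\
    (forall j j' x, j < n -> j' < n -> j <> j' -> Q j x -> Q j' x -> False) /\
    (forall i j x, i < m -> j < n -> P i x -> Q j x -> False) /\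
    (forall x, S x <-> exists i y, i < m /\ P i y /\ x = gmul G y (g i)) /\
    (forall x, S x <-> exists j y, j < n /\ Q j y /\ x = gmul G y (h j)).

(* Non-amenability, via Tarski's characterization recalled in the paper:
   G admits a paradoxical decomposition. *)
Definition nonamenable (G : Grp) : Prop :=
  exists m n, paradoxical G (full G) m n.

Definition is_tarski_number (G : Grp) (S : G -> Prop) (k : nat) : Prop :=
  (exists m n, paradoxical G S m n /\ m + n = k) /\
  (forall m n, paradoxical G S m n -> k <= m + n).

From Stdlib Require Import ZArith Lia.
From mathcomp Require Import all_boot finmap boolp classical_sets zify.
Set Implicit Arguments. Unset Strict Implicit. Unset Printing Implicit Defensive.

(* A paradoxical decomposition of G with m + n pieces is an injection of two copies
   of G into G sending y to some x with y = x a_i (first copy) or y = x b_j (second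
   copy), and one may assume a_0 = b_0 = 1.  With right coset representatives
   r_0, ..., r_(d-1) of H, the Schreier elements r_l a_i r_(l')^-1 of H (l < d,
   1 <= i < m) together with 1 give 1 + d (m - 1) translations of H, and likewise
   for the b_j.  Lifting a copy of y in H to the d elements y r_l turns the injection
   for G into a d-to-d correspondence, so the bipartite graph joining each copy of y
   to the elements y t^-1 satisfies Hall's condition.  Hall's marriage theorem for
   infinite graphs with finite neighbourhoods then yields a paradoxical decomposition
   of H with 2 + d (m + n - 2) pieces. *)

Section HallMarriage.
Variables L R : choiceType.
Local Open Scope fset_scope.

Definition nbhd (E : L -> {fset R}) (X : {fset L}) : {fset R} :=
  \bigcup_(u <- X) E u.

Definition hall_cond (E : L -> {fset R}) :=
  forall X : {fset L}, #|` X| <= #|` nbhd E X|.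

Lemma nbhdP E X r :
  reflect (exists2 u, u \in X & r \in E u) (r \in nbhd E X).
Proof.
apply: (iffP (bigfcupP _ _ _ _)) => [[u /andP[uX _] rE]|[u uX rE]].
  by exists u.
by exists u; rewrite ?uX.
Qed.

Lemma nbhdS E E' X X' :
  X `<=` X' -> (forall u, u \in X -> E u `<=` E' u) -> nbhd E X `<=` nbhd E' X'.
Proof.
move=> sX sE; apply/fsubsetP => r /nbhdP[u uX rE]; apply/nbhdP.
by exists u; [apply: (fsubsetP sX) | apply: (fsubsetP (sE _ uX))].
Qed.

Lemma nbhd1 E u : nbhd E [fset u] `<=` E u.
Proof. by apply/fsubsetP => r /nbhdP[v /fset1P ->]. Qed.

Lemma hall_cond_gt0 E u : hall_cond E -> 0 < #|` E u|.
Proof.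
move=> hE; have := hE [fset u]; rewrite cardfs1 => h.
exact: leq_trans h (fsubset_leq_card (nbhd1 E u)).
Qed.

Lemma leq_sum_fcard (B C : L -> {fset R}) (X : seq L) :
  (forall u, u \in X -> B u `<=` C u) ->
  \sum_(u <- X) #|` B u| <= \sum_(u <- X) #|` C u|.
Proof.
move=> BC; rewrite big_seq_cond [leqRHS]big_seq_cond.
by apply: leq_sum => u /andP[uX _]; exact: fsubset_leq_card (BC u uX).
Qed.

Lemma sum_fcard_eq_fsubset (B C : L -> {fset R}) (X : seq L) :
  (forall u, u \in X -> B u `<=` C u) ->
  \sum_(u <- X) #|` C u| <= \sum_(u <- X) #|` B u| ->
  forall u, u \in X -> C u `<=` B u.
Proof.
elim: X => [|x X IH] BC; rewrite ?big_cons => sumCB u //.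
have BCx : B x `<=` C x by apply: BC; rewrite mem_head.
have BCX : forall v, v \in X -> B v `<=` C v.
  by move=> v vX; apply: BC; rewrite inE vX orbT.
have cardx := fsubset_leq_card BCx.
have sumX := leq_sum_fcard BCX.
rewrite inE => /orP[/eqP ->|uX]; last by apply: IH => //; lia.
have cardCB : #|` C x| = #|` B x| by lia.
have eqBC : B x =i C x := elimT (fsubset_cardP (esym cardCB)) BCx.
by apply/fsubsetP => r; rewrite eqBC.
Qed.

Lemma hall_cond_delete_edge E u r :
  hall_cond E -> ~ hall_cond (fun v => if v == u then E u `\ r else E v) ->
  exists2 X, u \notin X & #|` nbhd E X `|` (E u `\ r)| <= #|` X|.
Proof.
set E' := fun v => _ => hE /existsNP[X /negP]; rewrite -ltnNge => ltX.
have uX : u \in X.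
  apply: contraLR ltX => uX; rewrite -leqNgt.
  apply: leq_trans (hE X) (fsubset_leq_card (nbhdS (fsubset_refl _) _)) => v vX.
  by rewrite /E'; case: eqP => // ev; move: uX; rewrite -ev vX.
exists (X `\ u); first by rewrite in_fsetD1 eqxx.
have := cardfsD1 u X; rewrite uX => cardX.
suff : #|` nbhd E (X `\ u) `|` (E u `\ r)| <= #|` nbhd E' X| by lia.
apply: fsubset_leq_card; apply/fsubsetP => s /fsetUP[/nbhdP[v]|sEu].
  by rewrite in_fsetD1 => /andP[vu vX] sE; apply/nbhdP; exists v; rewrite // /E' (negPf vu).
by apply/nbhdP; exists u; rewrite // /E' eqxx.
Qed.

(* If u had two neighbours, deleting either edge at u would break the Hall condition;
   by submodularity of #|nbhd E _| the two critical sets X1, X2 would make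
   u |` (X1 `|` X2) violate it. *)
Lemma minimal_hall_fcard1 E :
  hall_cond E ->
  (forall E', (forall v, E' v `<=` E v) -> hall_cond E' -> forall v, E v `<=` E' v) ->
  forall u, #|` E u| = 1.
Proof.
move=> hE minE u; have gt0 := hall_cond_gt0 u hE.
apply/eqP; rewrite eqn_leq gt0 andbT leqNgt; apply/negP => gt1.
have [r1 r1E] : exists r1, r1 \in E u by apply/fset0Pn; rewrite -cardfs_gt0.
have := cardfsD1 r1 (E u); rewrite r1E => cardE.
have [r2 /fsetD1P[r21 r2E]] : exists r2, r2 \in E u `\ r1.
  by apply/fset0Pn; rewrite -cardfs_gt0; lia.
have critical r : r \in E u -> ~ hall_cond (fun v => if v == u then E u `\ r else E v).
  move=> rE hr.
  have sub v : (if v == u then E u `\ r else E v) `<=` E v.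
    by case: eqP => [->|//]; apply: fsubsetDl.
  have /fsubsetP /(_ r rE) := minE _ sub hr u.
  by rewrite eqxx in_fsetD1 eqxx.
have [X1 uX1 c1] := hall_cond_delete_edge hE (critical _ r1E).
have [X2 uX2 c2] := hall_cond_delete_edge hE (critical _ r2E).
set Y1 := _ `|` _ in c1; set Y2 := _ `|` _ in c2.
have hU := hE (u |` (X1 `|` X2)); have hI := hE (X1 `&` X2).
rewrite cardfsU1 in_fsetU (negPf uX1) (negPf uX2) /= in hU.
have sU : nbhd E (u |` (X1 `|` X2)) `<=` Y1 `|` Y2.
  apply/fsubsetP => s /nbhdP[v]; rewrite in_fset1U in_fsetU.
  case/orP=> [/eqP ->|/orP[vX|vX]] sE; rewrite !in_fsetU.
  - have [->|sr1] := eqVneq s r1.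
      by rewrite !in_fsetD1 [r1 == r2]eq_sym r21 r1E !orbT.
    by rewrite in_fsetD1 sr1 sE !orbT.
  - by rewrite (introT (nbhdP _ _ _)) //; exists v.
  - by rewrite (introT (nbhdP E X2 s)) ?orbT //; exists v.
have sI : nbhd E (X1 `&` X2) `<=` Y1 `&` Y2.
  apply/fsubsetP => s /nbhdP[v /fsetIP[vX1 vX2] sE].
  by rewrite in_fsetI !in_fsetU !(introT (nbhdP _ _ _)) //; [exists v | exists v].
have := cardfsUI Y1 Y2; have := cardfsUI X1 X2.
have := fsubset_leq_card sU; have := fsubset_leq_card sI; lia.
Qed.

(* Counting the injection [Phi] on X x [0, d) proves #|X| * d <= #|nbhd N X| * d. *)
Lemma hall_cond_of_blowup (N : L -> {fset R}) (d : nat) (Phi : L -> nat -> R * nat) :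
  0 < d ->
  (forall u l, l < d -> (Phi u l).1 \in N u /\ (Phi u l).2 < d) ->
  (forall u u' l l', l < d -> l' < d -> Phi u l = Phi u' l' -> u = u' /\ l = l') ->
  hall_cond N.
Proof.
move=> d0 PhiN Phi_inj X.
pose lpairs := [seq (u, l) | u <- enum_fset X, l <- iota 0 d].
pose rpairs := [seq (r, l) | r <- enum_fset (nbhd N X), l <- iota 0 d].
have uniq_lpairs : uniq lpairs by rewrite allpairs_uniq ?fset_uniq ?iota_uniq // => -[??] [??].
have uniq_images : uniq (map (fun p => Phi p.1 p.2) lpairs).
  rewrite map_inj_in_uniq // => -[u l] [u' l'].
  move=> /allpairsP[[v k] [_ /= kd [-> ->]]] /allpairsP[[v' k'] [_ /= kd' [-> ->]]] e.
  rewrite mem_iota add0n in kd; rewrite mem_iota add0n in kd'.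
  by have [-> ->] := Phi_inj _ _ _ _ kd kd' e.
have images_sub : {subset map (fun p => Phi p.1 p.2) lpairs <= rpairs}.
  move=> p /mapP[_ /allpairsP[[v k] [vX /= kd ->]] ->] /=.
  rewrite mem_iota add0n in kd; have [h1 h2] := PhiN v k kd.
  case: (Phi v k) h1 h2 => r l' /= h1 h2.
  by apply/allpairsP; exists (r, l'); rewrite mem_iota add0n h2; split => //; apply/nbhdP; exists v.
have := uniq_leq_size uniq_images images_sub.
by rewrite size_map !size_allpairs size_iota leq_pmul2r.
Qed.

Variable N : L -> {fset R}.

Definition hall_subgraph := {E : L -> {fset R} | (forall u, E u `<=` N u) /\ hall_cond E}.

Definition subgraph_ge (s t : hall_subgraph) : bool :=
  `[< forall u, sval t u `<=` sval s u >].

Lemma chain_min_on (A : set hall_subgraph) (X : seq L) s :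
  total_on A subgraph_ge -> A s ->
  exists2 s0, A s0 & forall t, A t -> forall u, u \in X -> sval s0 u `<=` sval t u.
Proof.
move=> tot As.
pose w (t : hall_subgraph) := \sum_(u <- X) #|` sval t u|.
have exw : exists k, `[< exists2 t, A t & w t = k >] by exists (w s); apply/asboolP; exists s.
case: (ex_minnP exw) => k /asboolP[s0 As0 <-] minw; exists s0 => // t At u uX.
case: (tot _ _ As0 At) => /asboolP ge; last exact: ge.
apply: (sum_fcard_eq_fsubset (X := X) (fun v _ => ge v)) => //.
by apply: minw; apply/asboolP; exists t.
Qed.

Lemma hall_subgraph_chain_bound (A : set hall_subgraph) :
  hall_cond N -> total_on A subgraph_ge -> exists t, forall s, A s -> subgraph_ge s t.
Proof.
move=> hN tot.
pose meet u := [fset r in N u | `[< forall s : hall_subgraph, A s -> r \in sval s u >]].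
have meetP u r : r \in meet u = (r \in N u) && `[< forall s, A s -> r \in sval s u >].
  by rewrite !inE.
have meetN u : meet u `<=` N u by apply/fsubsetP => r; rewrite meetP => /andP[].
have hall_meet : hall_cond meet.
  move=> X; have [[s As]|nA] := pselect (exists s, A s).
    have [s0 As0 mins0] := chain_min_on (enum_fset X) tot As.
    apply: leq_trans (proj2 (svalP s0) X) (fsubset_leq_card (nbhdS _ _)) => // u uX.
    apply/fsubsetP => r rs0; rewrite meetP (fsubsetP (proj1 (svalP s0) u)) //=.
    by apply/asboolP => t At; exact: (fsubsetP (mins0 t At u uX)).
  apply: leq_trans (hN X) (fsubset_leq_card (nbhdS _ _)) => // u _.
  apply/fsubsetP => r rN; rewrite meetP rN; apply/asboolP => s As.
  by case: nA; exists s.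
exists (exist _ meet (conj meetN hall_meet)) => s As; apply/asboolP => u /=.
by apply/fsubsetP => r; rewrite meetP => /andP[_ /asboolP]; apply.
Qed.

(* Hall's marriage theorem for bipartite graphs with finite left neighbourhoods:
   by Zorn's lemma a minimal Hall subgraph exists, and it is a matching. *)
Theorem hall_marriage :
  hall_cond N -> exists2 f : L -> R, injective f & forall u, f u \in N u.
Proof.
move=> hN.
have ge_trans : forall r s t, subgraph_ge r s -> subgraph_ge s t -> subgraph_ge r t.
  move=> r s t /asboolP rs /asboolP st; apply/asboolP => u.
  exact: fsubset_trans (st u) (rs u).
have [[E [EN hE]] minE] := ZL_preorder (exist _ N (conj (fun=> fsubset_refl _) hN))
  (fun t => asboolT (fun u => fsubset_refl _)) ge_trans
  (fun A => hall_subgraph_chain_bound (A:=A) hN).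
have card1 : forall u, #|` E u| = 1.
  apply: minimal_hall_fcard1 => // E' E'E hE'.
  have E'N v : E' v `<=` N v by apply: fsubset_trans (E'E v) (EN v).
  by move: (minE (exist _ E' (conj E'N hE')) (asboolT E'E)) => /asboolP.
have [f Ef] := choice (fun u => elimT (cardfs1P (E u)) (introT eqP (card1 u))).
exists f => [u v fuv|u]; last by apply: (fsubsetP (EN u)); rewrite Ef inE.
apply/eqP/negPn/negP => uv.
have := hE [fset u; v]; rewrite cardfs2 uv /=.
have : nbhd E [fset u; v] `<=` [fset f u].
  apply/fsubsetP => r /nbhdP[w]; rewrite !inE => /orP[]/eqP ->; rewrite Ef inE //.
  by rewrite fuv.
by move/fsubset_leq_card; rewrite cardfs1; lia.
Qed.

End HallMarriage.

Section GroupTheory.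
Variable G : Grp.
Local Notation "x ** y" := (gmul G x y) (at level 40, left associativity).
Local Notation inv := (ginv G).
Local Notation one := (gone G).

Lemma gmulV x : x ** inv x = one.
Proof.
rewrite -(gmul1l G (x ** inv x)) -{1}(gmulVl G (inv x)).
by rewrite -gmulA (gmulA G (inv x)) gmulVl gmul1l gmulVl.
Qed.

Lemma gmul1r x : x ** one = x.
Proof. by rewrite -(gmulVl G x) gmulA gmulV gmul1l. Qed.

Lemma gmulK x y : x ** y ** inv y = x.
Proof. by rewrite -gmulA gmulV gmul1r. Qed.

Lemma gmulVK x y : x ** inv y ** y = x.
Proof. by rewrite -gmulA gmulVl gmul1r. Qed.

Lemma gmulKl x y : inv x ** (x ** y) = y.
Proof. by rewrite gmulA gmulVl gmul1l. Qed.

Lemma gmulIr z : injective (fun x => x ** z).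
Proof. by move=> x y /= e; rewrite -(gmulK x z) e gmulK. Qed.

Lemma gmulIl z : injective (gmul G z).
Proof. by move=> x y e; rewrite -(gmulKl z x) e gmulKl. Qed.

Lemma ginvM x y : inv (x ** y) = inv y ** inv x.
Proof.
by apply: (@gmulIl (x ** y)); rewrite gmulV -gmulA (gmulA G y) gmulV gmul1l gmulV.
Qed.

Lemma ginvK x : inv (inv x) = x.
Proof. by apply: (@gmulIl (inv x)); rewrite gmulV gmulVl. Qed.

Lemma ginv1 : inv one = one.
Proof. by rewrite -{2}(gmulV one) gmul1l. Qed.

(* A paradoxical decomposition of S read as an injection (c, y) |-> src c y of two
   copies of S into S, where y is the translate of src c y by a_i (copy c = true)
   or by b_j (copy c = false). *)
Definition paradox_matching (S : G -> Prop) (m n : nat) (a b : nat -> G) : Prop :=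
  (forall i, i < m -> S (a i)) /\ (forall j, j < n -> S (b j)) /\
  exists (src : bool -> G -> G) (idx : bool -> G -> nat),
   (forall c y, S y -> S (src c y) /\ idx c y < (if c then m else n) /\
                 y = src c y ** (if c then a else b) (idx c y)) /\
   (forall c c' y y', S y -> S y' -> src c y = src c' y' -> c = c' /\ y = y').

Lemma paradoxical_of_matching S m n a b :
  0 < m -> 0 < n -> paradox_matching S m n a b -> paradoxical G S m n.
Proof.
move=> /ltP m0 /ltP n0 [Sa [Sb [src [idx [srcP src_inj]]]]].
pose piece c i x := exists y, S y /\ idx c y = i /\ src c y = x.
have piece_disj c c' i i' x : piece c i x -> piece c' i' x -> c = c' /\ i = i'.
  move=> [y [Sy [<- <-]]] [y' [Sy' [<- e]]].
  by have [-> ->] := src_inj c c' y y' Sy Sy' (esym e).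
have pieceS c i x : piece c i x -> S x.
  by move=> [y [Sy [_ <-]]]; case: (srcP c y Sy).
have cover c x : S x <->
    exists i y, (i < if c then m else n)%coq_nat /\ piece c i y /\
      x = y ** (if c then a else b) i.
  split=> [Sx|[i [y [_ [[z [Sz [<- <-]]] ->]]]]]; last by case: (srcP c z Sz) => _ [_ <-].
  have [_ [lt_idx _]] := srcP c x Sx.
  exists (idx c x), (src c x); split; first exact/ltP.
  by split; [exists x | case: (srcP c x Sx) => _ []].
do 2 (split => //); exists (piece true), (piece false), a, b.
split; first by move=> i x _; apply: pieceS.
split; first by move=> j x _; apply: pieceS.
split; first by move=> i /ltP; apply: Sa.
split; first by move=> j /ltP; apply: Sb.
split; first by move=> i i' x _ _ ii' /piece_disj hx /hx [_].
split; first by move=> j j' x _ _ jj' /piece_disj hx /hx [_].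
split; first by move=> i j x _ _ /piece_disj hx /hx [].
by split; [apply: (cover true) | apply: (cover false)].
Qed.

Lemma matching_of_paradoxical S m n :
  paradoxical G S m n -> exists a b, paradox_matching S m n a b.
Proof.
move=> [_ [_ [P [Q [g [h [PS [QS [gS [hS [dP [dQ [dPQ [coverP coverQ]]]]]]]]]]]]]].
pose bound (c : bool) := if c then m else n.
pose piece (c : bool) := if c then P else Q.
have piece_disj c c' i i' x : (i < bound c)%coq_nat -> (i' < bound c')%coq_nat ->
    piece c i x -> piece c' i' x -> c = c' /\ i = i'.
  case: c c' => -[] /= ib i'b Px P'x.
  - by have [->|/eqP ii'] := eqVneq i i'; last case: (dP _ _ _ ib i'b ii' Px P'x).
  - by case: (dPQ _ _ _ ib i'b Px P'x).
  - by case: (dPQ _ _ _ i'b ib P'x Px).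
  - by have [->|/eqP ii'] := eqVneq i i'; last case: (dQ _ _ _ ib i'b ii' Px P'x).
pose decomp (cy : bool * G) (p : G * nat) := S cy.2 ->
  [/\ (p.2 < bound cy.1)%coq_nat, piece cy.1 p.2 p.1 &
   cy.2 = p.1 ** (if cy.1 then g else h) p.2].
have decomp_ex cy : exists p, decomp cy p.
  case: cy => c y; have [Sy|NSy] := pselect (S y); last by exists (one, 0).
  case: c.
    by have [i [z [? [? ?]]]] := proj1 (coverP y) Sy; exists (z, i).
  by have [i [z [? [? ?]]]] := proj1 (coverQ y) Sy; exists (z, i).
have [f fP] := choice decomp_ex.
exists g, h; split; first by move=> i /ltP; apply: gS.
split; first by move=> j /ltP; apply: hS.
exists (fun c y => (f (c, y)).1), (fun c y => (f (c, y)).2); split.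
  move=> c y Sy; have [ib Pz ey] := fP (c, y) Sy.
  split; first by case: c ib Pz {ey} => /= ib Pz; [exact: PS ib Pz | exact: QS ib Pz].
  by split; first apply/ltP.
move=> c c' y y' Sy Sy' e.
have [ib Pz ey] := fP (c, y) Sy; have [i'b P'z ey'] := fP (c', y') Sy'.
rewrite /= in ib Pz ey; rewrite /= -e in i'b P'z ey'.
have [ec ei] := piece_disj _ _ _ _ _ ib i'b Pz P'z.
by split; last rewrite ey ey' -ei -ec.
Qed.

Lemma matching_full_normal m n a b : paradox_matching (full G) m n a b ->
  exists a' b' (src : bool -> G -> G) (idx : bool -> G -> nat),
    [/\ a' 0 = one, b' 0 = one,
     forall c y, idx c y < (if c then m else n) /\
                 y = src c y ** (if c then a' else b') (idx c y) &
     forall c c' y y', src c y = src c' y' -> c = c' /\ y = y'].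
Proof.
move=> [_ [_ [src [idx [srcP src_inj]]]]].
pose t0 (c : bool) := if c then a 0 else b 0.
exists (fun i => a i ** inv (a 0)), (fun j => b j ** inv (b 0)).
exists (fun c y => src c (y ** t0 c)), (fun c y => idx c (y ** t0 c)).
split; [exact: gmulV | exact: gmulV | move=> c y | move=> c c' y y' e].
  have [_ [lt_idx e]] := srcP c (y ** t0 c) I; split => //.
  by case: c e {lt_idx} => /= e; rewrite gmulA -e gmulK.
have [ec ey] := src_inj c c' _ _ I I e; split => //.
by move: ey; rewrite -ec; apply: gmulIr.
Qed.

Section FiniteIndexTransfer.
Variables (H : G -> Prop) (d : nat) (r : nat -> G) (coset : G -> nat).
Hypothesis H_subgroup : is_subgroup G H.
Hypothesis cosetP : forall x, coset x < d /\ H (x ** inv (r (coset x))).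
Hypothesis coset_uniq : forall x j, j < d -> H (x ** inv (r j)) -> j = coset x.
Variables (m n : nat) (a b : nat -> G) (src : bool -> G -> G) (idx : bool -> G -> nat).
Hypotheses (a0 : a 0 = one) (b0 : b 0 = one).
Hypothesis srcP : forall c y,
  idx c y < (if c then m else n) /\ y = src c y ** (if c then a else b) (idx c y).
Hypothesis src_inj : forall c c' y y', src c y = src c' y' -> c = c' /\ y = y'.

Lemma subgroup1 : H one.
Proof. by case: H_subgroup. Qed.

Lemma subgroupM x y : H x -> H y -> H (x ** y).
Proof. by case: H_subgroup => _ [HM _]; apply: HM. Qed.

Lemma subgroupV x : H x -> H (inv x).
Proof. by case: H_subgroup => _ [_ HV]; apply: HV. Qed.

Lemma coset_mul y l : H y -> l < d -> coset (y ** r l) = l.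
Proof. by move=> Hy ld; apply/esym/coset_uniq; rewrite ?gmulK. Qed.

Definition trans (c : bool) := if c then a else b.
Definition schreier (l : nat) (g : G) := r l ** g ** inv (r (coset (r l ** g))).

(* Index 0 encodes the identity, index 1 + (i - 1) * d + l encodes schreier l (a i). *)
Definition htrans (c : bool) (k : nat) :=
  if k == 0 then one else schreier (k.-1 %% d) (trans c (1 + k.-1 %/ d)).
Definition hcount (c : bool) := 1 + d * ((if c then m else n) - 1).

Lemma schreierH l g : H (schreier l g).
Proof. by rewrite /schreier; case: (cosetP (r l ** g)). Qed.

Lemma htransH c k : H (htrans c k).
Proof. by rewrite /htrans; case: eqP => _; [exact: subgroup1 | exact: schreierH]. Qed.

Lemma htrans_schreier c i l : 0 < i -> l < d ->
  htrans c (1 + ((i.-1) * d + l)) = schreier l (trans c i).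
Proof.
move=> i0 ld; rewrite /htrans add1n /= modnMDl divnMDl ?(leq_ltn_trans _ ld) //.
by rewrite modn_small // divn_small // addn0 add1n prednK.
Qed.

Definition hleft := {classic ({y : G | H y} * bool)}.
Definition hright := {classic G}.

Definition hnbhd (u : hleft) : {fset hright} :=
  [fset (sval u.1 ** inv (htrans u.2 k) : hright) | k in iota 0 (hcount u.2)]%fset.

(* Shift the copy u of y in H to y * r l in G, take its source x there, and move
   x back into H by the coset representative of x; the coset index is kept. *)
Definition lift (u : hleft) (l : nat) : hright * nat :=
  let x := src u.2 (sval u.1 ** r l) in ((x ** inv (r (coset x)) : hright), coset x).

Lemma coset_gt0 : 0 < d.
Proof. by case: (cosetP one) => lt_d _; lia. Qed.

Lemma lift_in_hnbhd u l : l < d -> (lift u l).1 \in hnbhd u /\ (lift u l).2 < d.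
Proof.
move=> ld; case: u => [[y Hy] c]; rewrite /lift /hnbhd /=.
set z := y ** r l; set x := src c z.
have [lt_i ez] := srcP c z; rewrite -/x in ez; set i := idx c z in lt_i ez.
have [lx Hx] := cosetP x; split => //.
apply/imfsetP => /=; have [i0|i_gt0] := posnP i.
  exists 0; first exact: mem_head.
  have xz : x = z by move: ez; rewrite i0; case: (c); rewrite /= ?a0 ?b0 gmul1r => ->.
  by rewrite /htrans eqxx ginv1 gmul1r xz coset_mul // /z gmulK.
exists (1 + ((i.-1) * d + coset x)).
  by rewrite inE mem_iota; case: (c) lt_i => /= lt_i; nia.
rewrite htrans_schreier // /schreier.
have coset_l : coset (r (coset x) ** trans c i) = l.
  have -> : r (coset x) ** trans c i = inv (x ** inv (r (coset x))) ** y ** r l.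
    by rewrite ginvM ginvK -gmulA -/z ez -gmulA gmulKl.
  by apply: coset_mul ld; apply: subgroupM (subgroupV Hx) Hy.
by rewrite coset_l !ginvM ginvK !gmulA -/z ez /trans gmulK.
Qed.

Lemma lift_inj u u' l l' :
  l < d -> l' < d -> lift u l = lift u' l' -> u = u' /\ l = l'.
Proof.
move=> ld ld'; case: u => [[y Hy] c]; case: u' => [[y' Hy'] c']; rewrite /lift /=.
set x := src c (y ** r l); set x' := src c' (y' ** r l'); case=> e1 e2.
have [ec ez] : c = c' /\ y ** r l = y' ** r l'.
  by apply: src_inj; rewrite -/x -/x' -(gmulVK x (r (coset x))) e1 e2 gmulVK.
have el : l = l' by rewrite -(coset_mul Hy ld) -(coset_mul Hy' ld') ez.
subst c' l'; have ey := gmulIr ez; subst y'.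
by rewrite (Prop_irrelevance Hy Hy').
Qed.

Lemma matching_subgroup :
  paradox_matching H (hcount true) (hcount false) (htrans true) (htrans false).
Proof.
have [f f_inj fN] := hall_marriage (hall_cond_of_blowup coset_gt0 lift_in_hnbhd lift_inj).
have idx_ex (u : hleft) : exists k, k < hcount u.2 /\ f u = sval u.1 ** inv (htrans u.2 k).
  by have /imfsetP[k] := fN u; rewrite mem_iota add0n => /andP[_ ?] ->; exists k.
have [k_of k_ofP] := choice idx_ex.
pose hsrc c y := if pselect (H y) is left Hy then f (exist _ y Hy, c) else one.
pose hidx c y := if pselect (H y) is left Hy then k_of (exist _ y Hy, c) else 0.
have hsrcE c y (Hy : H y) : hsrc c y = f (exist _ y Hy, c).
  by rewrite /hsrc; case: pselect => [Hy'|//]; rewrite (Prop_irrelevance Hy' Hy).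
have hidxE c y (Hy : H y) : hidx c y = k_of (exist _ y Hy, c).
  by rewrite /hidx; case: pselect => [Hy'|//]; rewrite (Prop_irrelevance Hy' Hy).
split; first by move=> i _; apply: htransH.
split; first by move=> i _; apply: htransH.
exists hsrc, hidx; split.
  move=> c y Hy; rewrite (hsrcE c y Hy) (hidxE c y Hy).
  have [lt_k ek] := k_ofP (exist _ y Hy, c); rewrite /= in lt_k ek.
  split; first by rewrite ek; apply: subgroupM => //; apply/subgroupV/htransH.
  by split; case: (c) lt_k ek => // _ ->; rewrite gmulVK.
move=> c c' y y' Hy Hy'; rewrite (hsrcE c y Hy) (hsrcE c' y' Hy').
by move=> /f_inj [].
Qed.

End FiniteIndexTransfer.

End GroupTheory.

Lemma coset_selector (G : Grp) (H : G -> Prop) d : has_index G H d ->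
  exists (r : nat -> G) (coset : G -> nat),
    (forall x, coset x < d /\ H (gmul G x (ginv G (r (coset x))))) /\
    (forall x j, j < d -> H (gmul G x (ginv G (r j))) -> j = coset x).
Proof.
move=> [r rP]; have [coset cosetP] := choice rP.
exists r, coset; split=> [x|x j /ltP jd Hj]; first by have [/ltP ? [? _]] := cosetP x.
by have [_ [_ uniq]] := cosetP x; apply: uniq.
Qed.

Theorem paradoxical_finite_index (G : Grp) (H : G -> Prop) d m n :
  is_subgroup G H -> has_index G H d -> paradoxical G (full G) m n ->
  paradoxical G H (1 + d * (m - 1)) (1 + d * (n - 1)).
Proof.
move=> H_subgroup /coset_selector[r [coset [cosetP coset_uniq]]] PG.
have [a [b /matching_full_normal[a' [b' [src [idx [a0 b0 srcP src_inj]]]]]]] :=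
  matching_of_paradoxical PG.
apply: paradoxical_of_matching; rewrite ?add1n //.
exact: (matching_subgroup H_subgroup cosetP coset_uniq a0 b0 srcP src_inj).
Qed.

Lemma tarski_number_exists (G : Grp) (S : G -> Prop) :
  (exists m n, paradoxical G S m n) -> exists k, is_tarski_number G S k.
Proof.
move=> [m [n Pmn]].
have ex_k : exists k, `[< exists m n, paradoxical G S m n /\ m + n = k >].
  by exists (m + n); apply/asboolP; exists m, n.
case: (ex_minnP ex_k) => k /asboolP[m0 [n0 [P0 e0]]] min_k.
exists k; split; first by exists m0, n0.
by move=> m1 n1 P1; apply/leP/min_k/asboolP; exists m1, n1.
Qed.

Theorem theorem1 (G : Grp) (H : G -> Prop) (d : nat) :
  nonamenable G ->
  is_subgroup G H ->
  has_index G H d ->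
  exists kG kH : nat,
    is_tarski_number G (full G) kG /\
    is_tarski_number G H kH /\
    (Z.of_nat kH - 2 <= Z.of_nat d * (Z.of_nat kG - 2))%Z.
Proof.
move=> nonam H_subgroup H_index.
have [kG [[m [n [PG <-]]] minG]] := tarski_number_exists nonam.
have PH := paradoxical_finite_index H_subgroup H_index PG.
have [kH [exH minH]] := tarski_number_exists (ex_intro _ _ (ex_intro _ _ PH)).
exists (m + n), kH; split; first by split => //; exists m, n.
split; first by split.
have := minH _ _ PH; case: PG => m_gt0 [n_gt0 _]; nia.
Qed.
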